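(* Every sequential rule and every reverse sequential rule (as defined in the context) is a linear mapping from $\mathcal E^*$ to $2^{\mathcal A_k}$.
   Context: Let $\mathcal A=[m]$, $k\le m$, and for $i\le m$ let $\mathcal A_i$ be the set of $i$-element subsets of $\mathcal A$. The preference space is $\mathcal E=2^{\mathcal A}$; a profile is $P=(A_1,\dots,A_n)\in\mathcal E^n$, $n\ge1$, and $\mathcal E^*=\bigcup_{n\ge1}\mathcal E^n$. $\mathrm{Hist}(P)\in\mathbb Z_{\ge0}^{|\mathcal E|}$ counts the occurrences of each ballot in $P$. A mapping $f:\mathcal E^*\to\mathcal D$ ($\mathcal D$ finite) is linear if there exist $\vec h_1,\dots,\vec h_K\in\mathbb R^{|\mathcal E|}$ and $g:\{+,-,0\}^K\to\mathcal D$ with $f(P)=g(\mathrm{sign}(\mathrm{Hist}(P)\cdot\vec h_1),\dots,\mathrm{sign}(\mathrm{Hist}(P)\cdot\vec h_K))$ for all $P$. For a function $\mathbf s_i:2^{\mathcal A}\times\mathcal A_i\to\mathbb R$ and $M\in\mathcal A_i$ write $\mathbf s_i(P,M)=\sum_{j=1}^n\mathbf s_i(A_j,M)$. Sequential rule: given $\mathbf s_1,\dots,\mathbf s_k$ with $\mathbf s_i:2^{\mathcal A}\times\mathcal A_i\to\mathbb R$, set $\mathcal S_0=\{\emptyset\}$ and for $i=1,\dots,k$, $\mathcal S_i=\arg\max\{\mathbf s_i(P,M\cup\{a\}): M\in\mathcal S_{i-1}, a\in\mathcal A\setminus M\}$ (the set of all maximizing sets $M\cup\{a\}$); output $\mathcal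 S_k$. Reverse sequential rule: given $\mathbf s_1,\dots,\mathbf s_{m-k}$ with $\mathbf s_i:2^{\mathcal A}\times\mathcal A_{m-i}\to\mathbb R$, set $\mathcal S_0=\{\mathcal A\}$ and for $i=1,\dots,m-k$, $\mathcal S_i=\arg\max\{\mathbf s_i(P,M\setminus\{a\}): M\in\mathcal S_{i-1}, a\in M\}$; output $\mathcal S_{m-k}$. *)

From HB Require Import structures.
From mathcomp Require Import all_boot all_order all_algebra.
From mathcomp Require Import reals.
Set Implicit Arguments. Unset Strict Implicit. Unset Printing Implicit Defensive.
Import Order.TTheory GRing.Theory Num.Theory.
Local Open Scope ring_scope.

(* Candidates A = 'I_m; ballots are subsets {set 'I_m}; a profile is a
   (nonempty) sequence of ballots. *)

Inductive sgn := SPos | SNeg | SZero.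

Definition sign_of (R : realType) (x : R) : sgn :=
  if 0 < x then SPos else if x < 0 then SNeg else SZero.

Definition hist_dot (R : realType) (m : nat) (P : seq {set 'I_m})
    (h : {set 'I_m} -> R) : R :=
  \sum_(B : {set 'I_m}) (count_mem B P)%:R * h B.

Definition linear_mapping (R : realType) (m : nat) (D : finType)
    (f : seq {set 'I_m} -> D) : Prop :=
  exists (K : nat) (h : 'I_K -> {set 'I_m} -> R) (g : ('I_K -> sgn) -> D),
    forall P : seq {set 'I_m}, (0 < size P)%N ->
      f P = g (fun j => sign_of (hist_dot P (h j))).

Definition prof_score (R : realType) (m : nat)
    (si : {set 'I_m} -> {set 'I_m} -> R) (P : seq {set 'I_m}) (M : {set 'I_m}) : R :=
  \sum_(A <- P) si A M.

Definition argmax_set (R : realType) (m : nat) (F : {set 'I_m} -> R)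
    (C : {set {set 'I_m}}) : {set {set 'I_m}} :=
  [set X in C | [forall Y in C, F Y <= F X]].

(* Sequential rule; s i is the scoring function s_i (only evaluated on
   i-element sets M). *)
Fixpoint seq_S (R : realType) (m : nat) (s : nat -> {set 'I_m} -> {set 'I_m} -> R)
    (P : seq {set 'I_m}) (i : nat) : {set {set 'I_m}} :=
  match i with
  | 0 => [set set0]
  | i'.+1 =>
      argmax_set (prof_score (s i'.+1) P)
        [set M :|: [set a] | M in seq_S s P i', a in ~: M]
  end.

Definition sequential_rule (R : realType) (m k : nat)
    (s : nat -> {set 'I_m} -> {set 'I_m} -> R) (P : seq {set 'I_m}) :
    {set {set 'I_m}} := seq_S s P k.

(* Reverse sequential rule; s i is evaluated on (m - i)-element sets. *)
Fixpoint rev_S (R : realType) (m : nat) (s : nat -> {set 'I_m} -> {set 'I_m} -> R)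
    (P : seq {set 'I_m}) (i : nat) : {set {set 'I_m}} :=
  match i with
  | 0 => [set setT]
  | i'.+1 =>
      argmax_set (prof_score (s i'.+1) P)
        [set M :\ a | M in rev_S s P i', a in M]
  end.

Definition reverse_sequential_rule (R : realType) (m k : nat)
    (s : nat -> {set 'I_m} -> {set 'I_m} -> R) (P : seq {set 'I_m}) :
    {set {set 'I_m}} := rev_S s P (m - k).

From mathcomp Require Import all_boot all_order all_algebra.
From mathcomp Require Import reals.
Set Implicit Arguments. Unset Strict Implicit. Unset Printing Implicit Defensive.
Import Order.TTheory GRing.Theory Num.Theory.
Local Open Scope ring_scope.

(* Both rules are iterated argmax selections: stage i keeps the candidates X
   with s_i(P, Y) <= s_i(P, X) for every other candidate Y.  Each such
   comparison is the sign of the linear form Hist(P) . (s_i(., X) - s_i(., Y)),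
   and the candidate sets are drawn from a finite universe, so the output is a
   fixed function of the signs of finitely many linear forms of Hist(P). *)

Definition nonneg_sign (z : sgn) : bool := if z is SNeg then false else true.

Lemma nonneg_sign_of (R : realType) (x : R) : nonneg_sign (sign_of x) = (0 <= x).
Proof. by rewrite /sign_of; case: ltrgtP. Qed.

Lemma big_seq_hist_dot (R : realType) (m : nat) (P : seq {set 'I_m})
    (F : {set 'I_m} -> R) :
  \sum_(A <- P) F A = hist_dot P F.
Proof.
rewrite /hist_dot.
under [RHS]eq_bigr => B _ do rewrite -sum1_count natr_sum mulr_suml.
rewrite (exchange_big_dep xpredT) //=; apply: eq_bigr => A _.
by rewrite (big_pred1 A) ?mul1r // => B; rewrite eq_sym.
Qed.

Lemma prof_score_le_hist_dot (R : realType) (m : nat)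
    (si : {set 'I_m} -> {set 'I_m} -> R) (P : seq {set 'I_m}) (X Y : {set 'I_m}) :
  (prof_score si P Y <= prof_score si P X) =
  (0 <= hist_dot P (fun B => si B X - si B Y)).
Proof. by rewrite -big_seq_hist_dot sumrB subr_ge0. Qed.

Lemma linear_mapping_nneg (R : realType) (m : nat) (D T : finType)
    (f : seq {set 'I_m} -> D) (h : T -> {set 'I_m} -> R)
    (g : {ffun T -> bool} -> D) :
  (forall P, (0 < size P)%N -> f P = g [ffun t => 0 <= hist_dot P (h t)]) ->
  linear_mapping R f.
Proof.
move=> def_f; exists #|T|, (fun j => h (enum_val j)).
exists (fun sg => g [ffun t => nonneg_sign (sg (enum_rank t))]) => P P_gt0.
rewrite def_f //; congr g; apply/ffunP => t.
by rewrite !ffunE enum_rankK nonneg_sign_of.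
Qed.

Section IteratedArgmax.

Variable T : finType.

Definition argmax_rel (le : rel T) (C : {set T}) : {set T} :=
  [set X in C | [forall Y in C, le Y X]].

Variables (init : {set T}) (step : {set T} -> {set T}).

Fixpoint iter_argmax (le : nat -> rel T) (i : nat) : {set T} :=
  if i is i'.+1 then argmax_rel (le i) (step (iter_argmax le i')) else init.

Lemma eq_iter_argmax (le1 le2 : nat -> rel T) (N : nat) :
    (forall j, (j <= N)%N -> le1 j =2 le2 j) ->
  iter_argmax le1 N = iter_argmax le2 N.
Proof.
move=> eq_le.
suff eq_upto i : (i <= N)%N -> iter_argmax le1 i = iter_argmax le2 i by exact: eq_upto.
elim: i => [|i IHi] //= lt_iN; rewrite IHi ?(ltnW lt_iN) //.
by apply/setP => X; rewrite !inE; congr (_ && _); apply: eq_forallb => Y; rewrite eq_le.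
Qed.

End IteratedArgmax.

Definition score_le (R : realType) (m : nat) (s : nat -> {set 'I_m} -> {set 'I_m} -> R)
    (P : seq {set 'I_m}) (j : nat) : rel {set 'I_m} :=
  fun Y X => prof_score (s j) P Y <= prof_score (s j) P X.

Lemma iter_argmax_score_linear (R : realType) (m N : nat)
    (init : {set {set 'I_m}}) (step : {set {set 'I_m}} -> {set {set 'I_m}})
    (s : nat -> {set 'I_m} -> {set 'I_m} -> R) (f : seq {set 'I_m} -> {set {set 'I_m}}) :
    (forall P, f P = iter_argmax init step (score_le s P) N) ->
  linear_mapping R f.
Proof.
move=> def_f.
pose h (t : 'I_N.+1 * {set 'I_m} * {set 'I_m}) B := s t.1.1 B t.2 - s t.1.1 B t.1.2.
apply: (linear_mapping_nneg (h := h)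
  (g := fun sg => iter_argmax init step (fun j Y X => sg (inord j, Y, X)) N)).
move=> P _; rewrite def_f; apply: eq_iter_argmax => j le_jN Y X.
by rewrite ffunE /h /score_le /= inordK // prof_score_le_hist_dot.
Qed.

Lemma seq_S_iter_argmax (R : realType) (m : nat)
    (s : nat -> {set 'I_m} -> {set 'I_m} -> R) (P : seq {set 'I_m}) (i : nat) :
  seq_S s P i =
  iter_argmax [set set0] (fun S => [set M :|: [set a] | M in S, a in ~: M])
    (score_le s P) i.
Proof. by elim: i => //= i ->. Qed.

Lemma rev_S_iter_argmax (R : realType) (m : nat)
    (s : nat -> {set 'I_m} -> {set 'I_m} -> R) (P : seq {set 'I_m}) (i : nat) :
  rev_S s P i =
  iter_argmax [set setT] (fun S => [set M :\ a | M in S, a in M]) (score_le s P) i.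
Proof. by elim: i => //= i ->. Qed.

(* Linearity holds for every k. *)
Theorem theorem2 (R : realType) (m k : nat) (hkm : (k <= m)%N) :
  (forall s : nat -> {set 'I_m} -> {set 'I_m} -> R,
      linear_mapping R (sequential_rule k s)) /\
  (forall s : nat -> {set 'I_m} -> {set 'I_m} -> R,
      linear_mapping R (reverse_sequential_rule k s)).
Proof.
split=> s; apply: iter_argmax_score_linear => P.
  exact: seq_S_iter_argmax.
exact: rev_S_iter_argmax.
Qed.
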